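(* Let $q$ be a prime number and $l$ a positive integer. Then $\dfrac{1}{q^{s-1}}\in\mathbb{Q}\text{-}\mathcal{KS}(q^{l})$ for every positive integer $s$ dividing $l-1$.
   Context: Every nonzero rational $\alpha$ is written $\alpha=\alpha_1/\alpha_2$ with $\alpha_1\in\mathbb{Z}$, $\alpha_2$ a positive integer and $\gcd(\alpha_1,\alpha_2)=1$. For an integer $N\ge 2$ and a nonzero rational $\alpha=\alpha_1/\alpha_2$, $N$ is called an $\alpha$-Korselt number if $N\neq\alpha$ and $\alpha_2p-\alpha_1$ divides $\alpha_2N-\alpha_1$ (in $\mathbb{Z}$) for every prime divisor $p$ of $N$. $\mathbb{Q}\text{-}\mathcal{KS}(N)$ is the set of all $\beta\in\mathbb{Q}\setminus\{0,N\}$ such that $N$ is a $\beta$-Korselt number. *)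

From mathcomp Require Import all_boot all_order all_algebra.
Set Implicit Arguments. Unset Strict Implicit. Unset Printing Implicit Defensive.
Import Order.TTheory GRing.Theory Num.Theory.
Local Open Scope ring_scope.

(* A nonzero rational alpha is written alpha1/alpha2 with alpha1 = numq alpha,
   alpha2 = denq alpha > 0, gcd = 1 (the normal form of rat). *)

Definition is_Korselt (N : nat) (alpha : rat) : Prop :=
  (2 <= N)%N /\ alpha != 0 /\ alpha != (N%:R : rat) /\
  forall p : nat, prime p -> (p %| N)%N ->
    ((denq alpha * p%:Z - numq alpha) %| (denq alpha * N%:Z - numq alpha))%Z.

Definition QKS (N : nat) (beta : rat) : Prop :=
  beta != 0 /\ beta != (N%:R : rat) /\ is_Korselt N beta.

(* For alpha = 1/k we have alpha1 = 1 and alpha2 = k, so the Korselt condition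
   reads (k p - 1) | (k N - 1).  For N = q^l the only prime is p = q, and with
   k = q^(s-1) this becomes q^s - 1 | q^(s-1+l) - 1, which holds because
   s divides s - 1 + l. *)

From mathcomp Require Import all_boot all_order all_algebra.
Import Order.TTheory GRing.Theory Num.Theory.
Local Open Scope ring_scope.

Lemma numq_invn (k : nat) : (0 < k)%N -> numq ((k%:R : rat)^-1) = 1.
Proof.
move=> k_gt0; rewrite -div1r -[1]/(1%:~R) pmulrn coprimeq_num ?coprime1n //.
by rewrite mulr1 gtr0_sg // ltz_nat.
Qed.

Lemma denq_invn (k : nat) : (0 < k)%N -> denq ((k%:R : rat)^-1) = k.
Proof. by move=> k_gt0; rewrite pmulrn denqVz // -lt0n. Qed.

Lemma QKS_invn (N k : nat) : (2 <= N)%N -> (0 < k)%N ->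
  (forall p, prime p -> (p %| N)%N -> ((k * p).-1 %| (k * N).-1)%N) ->
  QKS N (k%:R^-1).
Proof.
move=> N_ge2 k_gt0 korselt.
have ne0 : (k%:R : rat)^-1 != 0 by rewrite invr_eq0 pnatr_eq0 -lt0n.
have neN : (k%:R : rat)^-1 != N%:R.
  apply/eqP => /(congr1 numq); rewrite numq_invn // pmulrn numq_int => -[N1].
  by move: N_ge2; rewrite -N1.
do 5!split=> //; move=> p p_pr p_dvdN.
rewrite numq_invn // denq_invn // -!PoszM -!predn_int ?muln_gt0 ?k_gt0 //=.
- exact: korselt p_pr p_dvdN.
- exact: prime_gt0.
- exact: ltnW N_ge2.
Qed.

Lemma dvdn_predX (q a b : nat) : (a %| b)%N -> ((q ^ a).-1 %| (q ^ b).-1)%N.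
Proof. by move=> /dvdnP [m ->]; rewrite mulnC expnM dvdn_pred_predX. Qed.

Theorem proposition5p1 (q l : nat) :
  prime q -> (0 < l)%N ->
  forall s : nat, (0 < s)%N -> (s %| l.-1)%N ->
    QKS (q ^ l)%N ((q%:R : rat) ^+ s.-1)^-1.
Proof.
move=> q_pr l_gt0 s s_gt0 s_dvd_l1.
have q_gt1 := prime_gt1 q_pr.
rewrite -natrX; apply: QKS_invn.
- by rewrite (leq_trans q_gt1) // -{1}[q]expn1 leq_pexp2l // ltnW.
- by rewrite expn_gt0 prime_gt0.
move=> p p_pr; rewrite Euclid_dvdX // dvdn_prime2 // => /andP [/eqP -> _].
rewrite -expnSr -expnD prednK //; apply: dvdn_predX.
by rewrite -[l](prednK l_gt0) addnS -addSn prednK // dvdn_addr.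
Qed.
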